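(* Work on the event that, for every level $m\in\{1,\dots,\overline m_T\}$ introduced by the GSR algorithm, the batch generated when level $m$ was introduced contains a task $i_m$ with $U^\star-U^{(i_m)}\le\epsilon^U_m$. Define $U^{\max}_t:=\max_{i\in\mathcal I_t}U^{(i)}$ and let $m_t$ be the algorithm's level at round $t$. Then for every $t$, $$U^\star-U^{\max}_t\le\epsilon^U_{\min\{m_t,m^\star\}}.$$ In particular $U^\star-U^{\max}_t\le\epsilon^U_{m_t}$ before level $m^\star$ is reached, and $U^\star-U^{\max}_t\le\epsilon^U_{m^\star}$ at all rounds after level $m^\star$ is introduced.
   Context: Tasks have long-run values $U^{(i)}\in[0,1]$, $U^\star:=\sup_iU^{(i)}$; $\epsilon^U_m:=\epsilon^U_02^{-m}$ with $\epsilon^U_0=1$. The GSR algorithm maintains a set $\mathcal I_t$ of instantiated tasks (tasks are only added, never removed) and a nondecreasing level counter $m_t\in\{0,\dots,\overline m_T\}$ starting at $0$; each time the level increases to $m$ a batch of new tasks is added to the set. $m^\star\in\{0,\dots,\overline m_T\}$ is a fixed target level. *)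

From HB Require Import structures.
From mathcomp Require Import all_boot all_order all_algebra.
From mathcomp Require Import all_classical all_reals.
Set Implicit Arguments. Unset Strict Implicit. Unset Printing Implicit Defensive.
Import Order.TTheory GRing.Theory Num.Theory.
Local Open Scope ring_scope.
Local Open Scope classical_set_scope.

Definition Ustar {R : realType} {I : Type} (U : I -> R) : R := sup (range U).

(* eps^U_m := eps^U_0 * 2^{-m}, with eps^U_0 = 1 *)
Definition epsU {R : realType} (m : nat) : R := (2 ^+ m)^-1.

Definition Umax {R : realType} {I : eqType} (U : I -> R) (It : seq I) : R :=
  sup [set U i | i in [set j | j \in It]].

From HB Require Import structures.
From mathcomp Require Import all_boot all_order all_algebra.
From mathcomp Require Import all_classical all_reals.
Set Implicit Arguments. Unset Strict Implicit. Unset Printing Implicit Defensive.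
Import Order.TTheory GRing.Theory Num.Theory.
Local Open Scope ring_scope.
Local Open Scope classical_set_scope.

(* Every level l <= m_t has been introduced by round t, so its batch, which
   contains a task with gap at most eps_l, is already instantiated; taking
   l = min m_t m_star bounds U_star - U^max_t.  At level 0 the bound eps_0 = 1
   is trivial because all values lie in [0, 1]. *)

Section SupBounds.
Variables (R : realType) (I : eqType) (U : I -> R).

Lemma Umax_ge_mem (s : seq I) (i : I) : i \in s -> U i <= Umax U s.
Proof.
move=> si; apply: ub_le_sup; last by exists i.
exists (\sum_(j <- s) `|U j|) => _ [j sj <-].
rewrite (big_rem j sj) /=; apply: le_trans (ler_norm _) _.
by rewrite lerDl sumr_ge0.
Qed.

Lemma Umax_ge0 (s : seq I) : (forall i, 0 <= U i) -> 0 <= Umax U s.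
Proof.
move=> U_ge0; case: s => [|i s].
  rewrite /Umax (_ : [set U i | i in _] = set0) ?sup0 //.
  by apply/seteqP; split=> // y [j]; rewrite /= in_nil.
exact: le_trans (U_ge0 i) (Umax_ge_mem (mem_head i s)).
Qed.

Lemma Ustar_le (c : R) : 0 <= c -> (forall i, U i <= c) -> Ustar U <= c.
Proof.
move=> c_ge0 U_le; rewrite /Ustar; have [->|/set0P ne] := eqVneq (range U) set0.
  by rewrite sup0.
by apply: ge_sup => // _ [i _ <-].
Qed.

End SupBounds.

Section LevelBatches.
Variables (I : eqType) (It : nat -> seq I) (m : nat -> nat) (Batch : nat -> seq I).
Hypothesis m0 : m 0%N = 0%N.
Hypothesis m_step : forall t, m t.+1 = m t \/ m t.+1 = (m t).+1.
Hypothesis It_mono : forall t, {subset It t <= It t.+1}.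
Hypothesis Batch_added :
  forall t, m t.+1 = (m t).+1 -> {subset Batch (m t.+1) <= It t.+1}.

Lemma batch_sub_instantiated t l : (0 < l <= m t)%N -> {subset Batch l <= It t}.
Proof.
elim: t l => [|t IH] l; first by rewrite m0; case: l.
case/andP=> l_gt0; rewrite leq_eqVlt => /predU1P[el | lt_l_mt1] x xB.
  case: (m_step t) => [e|up]; last by rewrite el in xB; exact: Batch_added xB.
  by apply: It_mono; apply: (IH l) xB; rewrite l_gt0 el e leqnn.
apply: It_mono; apply: (IH l) xB; rewrite l_gt0 /=.
by case: (m_step t) lt_l_mt1 => -> // /ltnW.
Qed.

End LevelBatches.

Theorem lemmaC20 (R : realType) (I : eqType) (U : I -> R)
  (mbar mstar : nat) (It : nat -> seq I) (m : nat -> nat) (Batch : nat -> seq I) :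
  (* task values in [0,1] *)
  (forall i, 0 <= U i <= 1) ->
  (* target level *)
  (mstar <= mbar)%N ->
  (* GSR dynamics: level starts at 0, stays in {0..mbar}, increases by at most 1 *)
  m 0%N = 0%N ->
  (forall t, (m t <= mbar)%N) ->
  (forall t, m t.+1 = m t \/ m t.+1 = (m t).+1) ->
  (* instantiated set: nonempty initially, tasks only added *)
  It 0%N != [::] ->
  (forall t, {subset It t <= It t.+1}) ->
  (* when the level increases to m, the batch for level m is added *)
  (forall t, m t.+1 = (m t).+1 -> {subset Batch (m t.+1) <= It t.+1}) ->
  (* the good event *)
  (forall l, (1 <= l <= mbar)%N ->
     exists2 i, i \in Batch l & Ustar U - U i <= epsU l) ->
  forall t, Ustar U - Umax U (It t) <= epsU (minn (m t) mstar).
Proof.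
move=> U01 le_mstar_mbar m0 _ m_step _ It_mono Batch_added good t.
have [U_ge0 U_le1] : (forall i, 0 <= U i) /\ (forall i, U i <= 1).
  by split=> i; case/andP: (U01 i).
set l := minn (m t) mstar.
have [->|l_gt0] := posnP l.
  rewrite /epsU expr0 invr1 lerBlDr (le_trans (Ustar_le ler01 U_le1)) //.
  by rewrite lerDl Umax_ge0.
have [|i iB good_i] := good l.
  by rewrite l_gt0 (leq_trans (geq_minr _ _)).
apply: le_trans good_i; rewrite lerD2l lerN2 Umax_ge_mem //.
apply: (batch_sub_instantiated m0 m_step It_mono Batch_added _ iB).
by rewrite l_gt0 geq_minl.
Qed.
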